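(* Let $\mathcal{T}$ be the set of infinite sequences $\mathbf{k}=(k_1,k_2,\ldots)$ of positive integers with $k_1\geq 2$, $k_i\geq 1$ for $i\geq 2$, and such that if $k_1=2$ then $k_s\geq 2$ for some $s\geq 2$. (i) For every $\mathbf{k}\in\mathcal{T}$ the limit $\lim_{r\to\infty}\zeta^{\star}(k_1,\ldots,k_r)$ exists and is $>1$. (ii) The map $\eta:\mathcal{T}\to(1,+\infty)$, $\eta(\mathbf{k})=\lim_{r\to\infty}\zeta^{\star}(k_1,\ldots,k_r)$, is bijective. Moreover, defining $\mathbf{k}\succ\mathbf{m}$ for $\mathbf{k},\mathbf{m}\in\mathcal{T}$ to mean that there is $j\geq 0$ with $k_i=m_i$ for $1\leq i\leq j$ and $k_{j+1}<m_{j+1}$, we have $\mathbf{k}\succ\mathbf{m}$ if and only if $\eta(\mathbf{k})>\eta(\mathbf{m})$. (iii) Let $\mathcal{Z}^{\star}$ be the set of all multiple zeta-star values. Then for every $n\geq 1$, the $n$-th derived set of $\mathcal{Z}^{\star}$ equals $[1,+\infty)$.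
   Context: For integers $k_1\geq 2$, $k_2,\ldots,k_r\geq 1$ ($r\geq1$), $\zeta^{\star}(k_1,\ldots,k_r)=\sum_{n_1\geq\cdots\geq n_r\geq 1}\frac{1}{n_1^{k_1}\cdots n_r^{k_r}}$; $\mathcal{Z}^{\star}$ is the set of all such values. For $\mathcal{C}\subseteq\mathbb{R}$, $\mathcal{C}'$ is its set of accumulation points, $\mathcal{C}^{(1)}=\mathcal{C}'$ and $\mathcal{C}^{(n+1)}=(\mathcal{C}^{(n)})'$. *)

From Stdlib Require Import Reals Lra Lia List.
From Coquelicot Require Import Coquelicot.
Open Scope R_scope.

(* zfin [k1;...;kr] N = sum over N >= n1 >= n2 >= ... >= nr >= 1 of
   1/(n1^k1 ... nr^kr)   (zfin [] N = 1). *)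
Fixpoint zfin (ks : list nat) (N : nat) {struct ks} : R :=
  match ks with
  | nil => 1
  | k :: ks' =>
      (fix s (M : nat) : R :=
         match M with
         | O => 0
         | S n => s n + / (INR (S n) ^ k) * zfin ks' (S n)
         end) N
  end.

Definition zeta_star (ks : list nat) : R := real (Lim_seq (zfin ks)).

Definition admissible (ks : list nat) : Prop :=
  match ks with
  | nil => False
  | k1 :: _ => (2 <= k1)%nat /\ (forall k, List.In k ks -> (1 <= k)%nat)
  end.

Definition Zstar (x : R) : Prop :=
  exists ks, admissible ks /\ x = zeta_star ks.

Definition derived (C : R -> Prop) (x : R) : Prop :=
  forall eps : R, 0 < eps -> exists y, C y /\ y <> x /\ Rabs (y - x) < eps.

Fixpoint derived_n (n : nat) (C : R -> Prop) : R -> Prop :=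
  match n with
  | O => C
  | S m => derived (derived_n m C)
  end.

(* Infinite sequences k = (k_1, k_2, ...) are encoded as k : nat -> nat with
   k 0 = k_1, k 1 = k_2, ...; prefix k r = [k_1; ...; k_r]. *)
Definition prefix (k : nat -> nat) (r : nat) : list nat := map k (seq 0%nat r).

Definition inT (k : nat -> nat) : Prop :=
  (2 <= k 0%nat)%nat /\ (forall i, (1 <= k i)%nat) /\
  (k 0%nat = 2%nat -> exists s, (1 <= s)%nat /\ (2 <= k s)%nat).

Definition eta (k : nat -> nat) : R :=
  real (Lim_seq (fun r => zeta_star (prefix k r))).

(* k > m : exists j >= 0 with k_i = m_i for 1 <= i <= j and k_{j+1} < m_{j+1}
   (0-indexed below). *)
Definition succ_lex (k m : nat -> nat) : Prop :=
  exists j : nat, (forall i, (i < j)%nat -> k i = m i) /\ (k j < m j)%nat.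

From Stdlib Require Import Reals Lra Lia List ClassicalEpsilon Wf_nat.
From Coquelicot Require Import Coquelicot.
Open Scope R_scope.

(* All truncated sums are nondecreasing in the cut-off and in the length of the
   index, so every limit involved is a supremum.  Summing the tail (1,1,...) against
   n^-(b+1) leaves n^-b, hence zeta*(p, b+1, t) <= zeta*(p, b) for any tail t.
   With zeta*(k1, q) <= 3 * 2^|q| this bounds eta on T, and with the gap
   zeta*(q) < zeta*(q, b) it makes eta strictly decreasing for the lexicographic
   order.  Conversely eta^-1(x) is built greedily, taking at each step the least
   entry a with zeta*(p, a) < x: the invariant zeta*(p) < x <= zeta*(p, 1, 1, ...)
   persists, and the two sides merge in the limit.  The truncations of eta^-1(x)
   are multiple zeta-star values approaching x from below, so every x >= 1 is an
   accumulation point of Z*, and [1, +oo) is its own derived set. *)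

Lemma sum_n_m_le_loc (a b : nat -> R) (n m : nat) :
  (forall k, (n <= k <= m)%nat -> a k <= b k) -> sum_n_m a n m <= sum_n_m b n m.
Proof.
  intros H. induction m as [|m IH].
  - destruct n as [|n].
    + rewrite !sum_n_n. apply H; lia.
    + rewrite !sum_n_m_zero by lia. apply Rle_refl.
  - destruct (Nat.le_gt_cases n (S m)).
    + rewrite !sum_n_Sm by lia.
      apply Rplus_le_compat; [apply IH; intros; apply H; lia | apply H; lia].
    + rewrite !sum_n_m_zero by lia. apply Rle_refl.
Qed.

(** * Nested truncated sums *)

Definition ipow (k n : nat) : R := / INR n ^ k.

Lemma ipow_pos k n : (1 <= n)%nat -> 0 < ipow k n.
Proof. intros; apply Rinv_0_lt_compat, pow_lt, lt_0_INR; lia. Qed.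

Lemma ipow_1 k : ipow k 1 = 1.
Proof. unfold ipow; simpl. rewrite pow1. apply Rinv_1. Qed.

Lemma ipow_antitone a b n : (b <= a)%nat -> (1 <= n)%nat -> ipow a n <= ipow b n.
Proof.
  intros Hab Hn; unfold ipow. apply Rinv_le_contravar.
  - apply pow_lt, lt_0_INR; lia.
  - apply Rle_pow; [apply (le_INR 1)|]; lia.
Qed.

Lemma ipow_S_mul k n : (1 <= n)%nat -> ipow (S k) n * INR n = ipow k n.
Proof.
  intros Hn; unfold ipow; simpl.
  assert (0 < INR n) by (apply lt_0_INR; lia).
  assert (0 < INR n ^ k) by (apply pow_lt; lra).
  field; lra.
Qed.

Fixpoint nsum (ks : list nat) (g : nat -> R) (N : nat) : R :=
  match ks with
  | nil => g N
  | k :: ks' => sum_n_m (fun n => ipow k n * nsum ks' g n) 1 N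
  end.

Lemma nsum_cons_0 k p g : nsum (k :: p) g 0 = 0.
Proof. simpl. rewrite sum_n_m_zero by lia. reflexivity. Qed.

Lemma nsum_cons_S k p g N :
  nsum (k :: p) g (S N) = nsum (k :: p) g N + ipow k (S N) * nsum p g (S N).
Proof. simpl. rewrite sum_n_Sm by lia. reflexivity. Qed.

Lemma nsum_single_S k g N :
  nsum (k :: nil) g (S N) = nsum (k :: nil) g N + ipow k (S N) * g (S N).
Proof. apply nsum_cons_S. Qed.

Lemma zfin_nsum p N : zfin p N = nsum p (fun _ => 1) N.
Proof.
  revert N; induction p as [|k p IHp]; intros N; [reflexivity|].
  induction N as [|N IHN].
  - symmetry; apply nsum_cons_0.
  - rewrite nsum_cons_S, <- IHN, <- IHp. reflexivity.
Qed.

Lemma nsum_plus p g h N : nsum p (fun n => g n + h n) N = nsum p g N + nsum p h N.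
Proof.
  revert N; induction p as [|k p IH]; intros N; simpl; [reflexivity|].
  etransitivity; [|apply (sum_n_m_plus (G := R_AbelianMonoid))].
  apply sum_n_m_ext; intros n. rewrite IH. apply Rmult_plus_distr_l.
Qed.

Lemma nsum_scal p a g N : nsum p (fun n => a * g n) N = a * nsum p g N.
Proof.
  revert N; induction p as [|k p IH]; intros N; simpl; [reflexivity|].
  etransitivity; [|apply (sum_n_m_mult_l (K := R_Ring))].
  apply sum_n_m_ext; intros n. rewrite IH. unfold mult; simpl. ring.
Qed.

Lemma nsum_ext p g h : (forall n, g n = h n) -> forall N, nsum p g N = nsum p h N.
Proof.
  intros H; induction p as [|k p IH]; intros N; simpl; [apply H|].
  apply sum_n_m_ext; intros n. rewrite IH. reflexivity.
Qed.

Lemma nsum_app p q g N : nsum (p ++ q) g N = nsum p (nsum q g) N.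
Proof.
  revert N; induction p as [|k p IH]; intros N; simpl; [reflexivity|].
  apply sum_n_m_ext; intros n. rewrite IH. reflexivity.
Qed.

Lemma nsum_le p g h N : (1 <= N)%nat ->
  (forall n, (1 <= n <= N)%nat -> g n <= h n) -> nsum p g N <= nsum p h N.
Proof.
  revert N; induction p as [|k p IH]; intros N HN H; simpl; [apply H; lia|].
  apply sum_n_m_le_loc; intros n Hn.
  apply Rmult_le_compat_l; [left; apply ipow_pos; lia|].
  apply IH; [lia | intros; apply H; lia].
Qed.

Lemma nsum_nonneg p g N : (1 <= N)%nat ->
  (forall n, (1 <= n <= N)%nat -> 0 <= g n) -> 0 <= nsum p g N.
Proof.
  intros HN H. replace 0 with (nsum p (fun n => 0 * g n) N).
  - apply nsum_le; [exact HN|]. intros n Hn. rewrite Rmult_0_l. auto.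
  - rewrite nsum_scal. apply Rmult_0_l.
Qed.

Lemma nsum_pos p g N : (1 <= N)%nat ->
  (forall n, (1 <= n <= N)%nat -> 0 <= g n) -> 0 < g N -> 0 < nsum p g N.
Proof.
  revert N; induction p as [|k p IH]; intros N HN H HgN; [exact HgN|].
  destruct N as [|N]; [lia|]. rewrite nsum_cons_S.
  apply Rplus_le_lt_0_compat.
  - destruct N as [|N]; [rewrite nsum_cons_0; apply Rle_refl|].
    apply nsum_nonneg; [lia | intros; apply H; lia].
  - apply Rmult_lt_0_compat; [apply ipow_pos; lia|]. apply IH; auto.
Qed.

Lemma nsum_le_N p g N M : p <> nil -> (forall n, (1 <= n)%nat -> 0 <= g n) ->
  (N <= M)%nat -> nsum p g N <= nsum p g M.
Proof.
  intros Hp Hg HNM. destruct p as [|k p]; [congruence|].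
  induction HNM as [|M _ IH]; [apply Rle_refl|].
  rewrite nsum_cons_S. apply (Rle_trans _ _ _ IH).
  rewrite <- (Rplus_0_r (nsum _ g M)) at 1. apply Rplus_le_compat_l, Rmult_le_pos.
  - left; apply ipow_pos; lia.
  - apply nsum_nonneg; [lia | intros; apply Hg; lia].
Qed.

Lemma sum_n_m_le_pred (f : nat -> R) c n : (1 <= n)%nat -> f 1%nat <= 0 ->
  (forall m, (2 <= m <= n)%nat -> f m <= c) -> sum_n_m f 1 n <= c * (INR n - 1).
Proof.
  intros Hn H1 H. rewrite sum_Sn_m by lia.
  replace (c * (INR n - 1)) with (0 + sum_n_m (fun _ => c) 2 n).
  - apply Rplus_le_compat; [exact H1|]. apply sum_n_m_le_loc; exact H.
  - rewrite sum_n_m_const, minus_INR, S_INR by lia. change (INR 2) with (1 + 1). ring.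
Qed.

Lemma nsum_antitone_weight a b g N : (b <= a)%nat -> (forall n, 0 <= g n) ->
  nsum (a :: nil) g N <= nsum (b :: nil) g N.
Proof.
  intros Hab Hg. simpl. apply sum_n_m_le_loc; intros n Hn.
  apply Rmult_le_compat_r; [apply Hg | apply ipow_antitone; lia].
Qed.

Lemma zfin_cons_S k p N : zfin (k :: p) (S N) = zfin (k :: p) N + ipow k (S N) * zfin p (S N).
Proof. reflexivity. Qed.

Lemma zfin_app p q N : zfin (p ++ q) N = nsum p (zfin q) N.
Proof.
  rewrite !zfin_nsum, nsum_app. apply nsum_ext; intros n. symmetry; apply zfin_nsum.
Qed.

Lemma zfin_at_1 p : zfin p 1 = 1.
Proof.
  induction p as [|k p IH]; [reflexivity|].
  rewrite zfin_cons_S, IH, ipow_1. simpl. ring.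
Qed.

Lemma zfin_le_N p N M : (N <= M)%nat -> zfin p N <= zfin p M.
Proof.
  intros HNM. destruct p as [|k p]; [apply Rle_refl|]. rewrite !zfin_nsum.
  apply nsum_le_N; [congruence | intros; lra | exact HNM].
Qed.

Lemma zfin_ge_1 p N : (1 <= N)%nat -> 1 <= zfin p N.
Proof. intros HN. rewrite <- (zfin_at_1 p). apply zfin_le_N, HN. Qed.

Lemma zfin_nonneg p N : 0 <= zfin p N.
Proof.
  destruct N as [|N]; [destruct p; simpl; lra|].
  apply Rle_trans with 1; [lra | apply zfin_ge_1; lia].
Qed.

Lemma zfin_le_of_pos p c : (forall N, (1 <= N)%nat -> zfin p N <= c) -> forall N, zfin p N <= c.
Proof. intros H N. eapply Rle_trans; [apply zfin_le_N, le_S, le_n | apply H; lia]. Qed.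

Lemma zfin_le_app q t N : (1 <= N)%nat -> zfin q N <= zfin (q ++ t) N.
Proof.
  intros HN. rewrite zfin_app, zfin_nsum. apply nsum_le; [exact HN|].
  intros; apply zfin_ge_1; lia.
Qed.

Lemma zfin_last_antitone q a b N : (b <= a)%nat ->
  zfin (q ++ a :: nil) N <= zfin (q ++ b :: nil) N.
Proof.
  intros Hab. destruct N as [|N]; [destruct q; simpl; lra|].
  rewrite !zfin_app. apply nsum_le; [lia|]. intros n _. rewrite !zfin_nsum.
  apply nsum_antitone_weight; [exact Hab | intros; lra].
Qed.

Lemma nsum_one_INR n : nsum (1%nat :: nil) INR n = INR n.
Proof.
  induction n as [|n IH]; [apply nsum_cons_0|].
  rewrite nsum_single_S, IH.
  rewrite ipow_S_mul by lia. unfold ipow. rewrite pow_O, Rinv_1, S_INR. ring.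
Qed.

(* nsum q INR truncates zeta*(q,1,1,...): the tail turns n^-(b+1) into n^-b. *)
Lemma nsum_INR_last q b N : nsum (q ++ S b :: nil) INR N = zfin (q ++ b :: nil) N.
Proof.
  rewrite nsum_app, zfin_app. apply nsum_ext; intros n. rewrite zfin_nsum. simpl.
  apply sum_n_m_ext_loc; intros m Hm. rewrite ipow_S_mul by lia. symmetry; apply Rmult_1_r.
Qed.

Lemma zfin_le_INR q n : List.Forall (le 1) q -> (1 <= n)%nat -> zfin q n <= INR n.
Proof.
  revert n; induction q as [|k q IH]; intros n Hq Hn; [apply (le_INR 1), Hn|].
  apply Forall_cons_iff in Hq as [Hk Hq].
  change (k :: q) with ((k :: nil) ++ q). rewrite zfin_app, <- (nsum_one_INR n).
  apply Rle_trans with (nsum (k :: nil) INR n).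
  - apply nsum_le; [exact Hn|]. intros m Hm. apply IH; [exact Hq | lia].
  - apply nsum_antitone_weight; [exact Hk | apply pos_INR].
Qed.

Lemma zfin_app_le_nsum_INR q t N : List.Forall (le 1) t -> (1 <= N)%nat ->
  zfin (q ++ t) N <= nsum q INR N.
Proof.
  intros Ht HN. rewrite zfin_app. apply nsum_le; [exact HN|].
  intros n Hn. apply zfin_le_INR; [exact Ht | lia].
Qed.

Lemma zfin_tail_le q b t N : List.Forall (le 1) t ->
  zfin (q ++ S b :: t) N <= zfin (q ++ b :: nil) N.
Proof.
  intros Ht. destruct N as [|N]; [destruct q; simpl; lra|].
  replace (q ++ S b :: t) with ((q ++ S b :: nil) ++ t) by (rewrite <- app_assoc; reflexivity).
  rewrite <- nsum_INR_last. apply zfin_app_le_nsum_INR; [exact Ht | lia].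
Qed.

Lemma nsum_one_sqrt n : nsum (1%nat :: nil) (fun m => sqrt (INR m)) n <= 2 * sqrt (INR n).
Proof.
  induction n as [|n IH]; [rewrite nsum_cons_0; pose proof (sqrt_pos (INR 0)); lra|].
  rewrite nsum_single_S.
  assert (Hstep : ipow 1 (S n) * sqrt (INR (S n)) <= 2 * (sqrt (INR (S n)) - sqrt (INR n))).
  { set (a := sqrt (INR n)); set (b := sqrt (INR (S n))).
    assert (Ha : 0 <= a) by apply sqrt_pos.
    assert (Hb : 0 < b) by (apply sqrt_lt_R0, lt_0_INR; lia).
    assert (Ha2 : a * a = INR n) by (apply sqrt_sqrt, pos_INR).
    assert (Hb2 : b * b = INR n + 1) by (rewrite <- S_INR; apply sqrt_sqrt, pos_INR).
    unfold ipow. rewrite pow_1, S_INR, <- Hb2.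
    replace (/ (b * b) * b) with (/ b) by (field; lra).
    apply Rmult_le_reg_r with b; [exact Hb|]. rewrite Rinv_l by lra. nra. }
  lra.
Qed.

Lemma nsum_two_sqrt N : nsum (2%nat :: nil) (fun m => sqrt (INR m)) N <= 3.
Proof.
  assert (H : forall N, (1 <= N)%nat ->
    nsum (2%nat :: nil) (fun m => sqrt (INR m)) N <= 3 - 2 / sqrt (INR N)).
  { intros M HM. induction HM as [|M HM IH].
    - rewrite nsum_cons_S, nsum_cons_0, ipow_1. simpl. rewrite sqrt_1. lra.
    - rewrite nsum_single_S.
      set (a := sqrt (INR M)) in *; set (b := sqrt (INR (S M))).
      assert (Ha : 0 < a) by (apply sqrt_lt_R0, lt_0_INR; lia).
      assert (Ha2 : a * a = INR M) by (apply sqrt_sqrt, pos_INR).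
      assert (Hb2 : b * b = INR M + 1) by (rewrite <- S_INR; apply sqrt_sqrt, pos_INR).
      assert (Hb : 0 < b) by (apply sqrt_lt_R0, lt_0_INR; lia).
      assert (Hab : a < b) by nra.
      assert (Hstep : ipow 2 (S M) * b <= 2 / a - 2 / b).
      { unfold ipow. rewrite S_INR, <- Hb2.
        replace (/ ((b * b) ^ 2) * b) with (/ (b * b * b)) by (field; lra).
        replace (2 / a - 2 / b) with (2 * (b - a) / (a * b)) by (field; lra).
        assert (Hd : (b - a) * (a + b) = 1) by nra.
        apply Rmult_le_reg_r with (a * b * b * b * (a + b)); [repeat apply Rmult_lt_0_compat; lra|].
        replace (/ (b * b * b) * (a * b * b * b * (a + b))) with (a * (a + b)) by (field; lra).
        replace (2 * (b - a) / (a * b) * (a * b * b * b * (a + b)))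
          with (2 * b * b * ((b - a) * (a + b))) by (field; lra).
        rewrite Hd. nra. }
      lra. }
  destruct N as [|N]; [rewrite nsum_cons_0; lra|].
  specialize (H (S N) ltac:(lia)).
  assert (0 < 2 / sqrt (INR (S N))).
  { apply Rdiv_lt_0_compat; [lra | apply sqrt_lt_R0, lt_0_INR; lia]. }
  lra.
Qed.

Lemma zfin_le_sqrt q n : List.Forall (le 1) q -> (1 <= n)%nat ->
  zfin q n <= 2 ^ length q * sqrt (INR n).
Proof.
  revert n; induction q as [|k q IH]; intros n Hq Hn.
  - simpl. rewrite Rmult_1_l, <- sqrt_1. apply sqrt_le_1_alt, (le_INR 1), Hn.
  - apply Forall_cons_iff in Hq as [Hk Hq].
    set (c := 2 ^ length q).
    assert (Hc : 0 < c) by (apply pow_lt; lra).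
    change (k :: q) with ((k :: nil) ++ q). rewrite zfin_app.
    apply Rle_trans with (nsum (1%nat :: nil) (fun m => c * sqrt (INR m)) n).
    + apply Rle_trans with (nsum (k :: nil) (fun m => c * sqrt (INR m)) n).
      * apply nsum_le; [exact Hn|]. intros m Hm. apply IH; [exact Hq | lia].
      * apply nsum_antitone_weight; [exact Hk|]. intros m. pose proof (sqrt_pos (INR m)); nra.
    + rewrite nsum_scal. pose proof (nsum_one_sqrt n). simpl length. simpl pow. fold c. nra.
Qed.

(* Each entry >= 1 costs at most a factor 2 against sqrt n, and n^-2 sqrt n is summable. *)
Lemma zfin_admissible_bound k1 q N : (2 <= k1)%nat -> List.Forall (le 1) q ->
  zfin (k1 :: q) N <= 3 * 2 ^ length q.
Proof.
  intros Hk1 Hq. set (c := 2 ^ length q).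
  assert (Hc : 0 < c) by (apply pow_lt; lra).
  destruct N as [|N]; [simpl; lra|].
  change (k1 :: q) with ((k1 :: nil) ++ q). rewrite zfin_app.
  apply Rle_trans with (nsum (2%nat :: nil) (fun m => c * sqrt (INR m)) (S N)).
  - apply Rle_trans with (nsum (k1 :: nil) (fun m => c * sqrt (INR m)) (S N)).
    + apply nsum_le; [lia|]. intros m Hm. apply zfin_le_sqrt; [exact Hq | lia].
    + apply nsum_antitone_weight; [exact Hk1|]. intros m. pose proof (sqrt_pos (INR m)); nra.
  - rewrite nsum_scal. pose proof (nsum_two_sqrt (S N)). nra.
Qed.

Lemma admissible_bounded p : admissible p -> exists B, forall N, zfin p N <= B.
Proof.
  destruct p as [|k1 q]; [intros []|]. intros [Hk1 Hq].
  exists (3 * 2 ^ length q). intros N. apply zfin_admissible_bound; [exact Hk1|].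
  apply Forall_forall. intros k Hk. apply Hq. right; exact Hk.
Qed.

(* Telescoping bound m^-a <= 2^(2-a) m^-2 <= 2^(2-a) (1/(m-1) - 1/m). *)
Lemma ipow_le_telescoping a m : (2 <= a)%nat -> (2 <= m)%nat ->
  ipow a m <= 4 * (/ 2) ^ a * (/ (INR m - 1) - / INR m).
Proof.
  intros Ha Hm. assert (HM : 2 <= INR m) by (apply (le_INR 2); lia).
  replace a with (S (S (a - 2))) by lia. set (j := (a - 2)%nat).
  assert (Hj : 0 < 2 ^ j) by (apply pow_lt; lra).
  assert (Hmj : 2 ^ j <= INR m ^ j) by (apply pow_incr; lra).
  replace (4 * (/ 2) ^ S (S j)) with (/ 2 ^ j) by (rewrite pow_inv; simpl; field; lra).
  replace (/ (INR m - 1) - / INR m) with (/ (INR m * (INR m - 1))) by (field; lra).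
  unfold ipow. rewrite <- Rinv_mult.
  apply Rinv_le_contravar; [apply Rmult_lt_0_compat; [lra | apply Rmult_lt_0_compat; lra]|].
  simpl. nra.
Qed.

Lemma zfin_singleton_le a n : (2 <= a)%nat -> zfin (a :: nil) n <= 1 + 4 * (/ 2) ^ a.
Proof.
  intros Ha. set (c := 4 * (/ 2) ^ a).
  assert (Hc : 0 < c) by (unfold c; apply Rmult_lt_0_compat; [lra | apply pow_lt; lra]).
  assert (H : forall n, (1 <= n)%nat -> zfin (a :: nil) n <= 1 + c * (1 - / INR n)).
  { intros M HM. induction HM as [|M HM IH].
    - rewrite zfin_at_1. simpl. rewrite Rinv_1. lra.
    - rewrite zfin_cons_S. change (zfin nil (S M)) with 1.
      pose proof (ipow_le_telescoping a (S M) Ha ltac:(lia)) as HS. fold c in HS.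
      replace (INR (S M) - 1) with (INR M) in HS by (rewrite S_INR; ring).
      lra. }
  destruct n as [|n]; [simpl; lra|].
  specialize (H (S n) ltac:(lia)).
  assert (0 < c * / INR (S n)).
  { apply Rmult_lt_0_compat; [exact Hc | apply Rinv_0_lt_compat, lt_0_INR; lia]. }
  lra.
Qed.

Lemma zfin_app_singleton_le p a N : (2 <= a)%nat ->
  zfin (p ++ a :: nil) N <= (1 + 4 * (/ 2) ^ a) * zfin p N.
Proof.
  intros Ha. destruct N as [|N].
  - pose proof (zfin_nonneg p 0). assert (0 < (/ 2) ^ a) by (apply pow_lt; lra).
    destruct p; simpl; nra.
  - rewrite zfin_app, zfin_nsum, <- nsum_scal. apply nsum_le; [lia|].
    intros n _. rewrite Rmult_1_r. apply zfin_singleton_le, Ha.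
Qed.

Lemma zfin_one_unbounded B : exists N, (1 <= N)%nat /\ B < zfin (1%nat :: nil) N.
Proof.
  assert (H : forall N, INR N + 1 <= exp (zfin (1%nat :: nil) N)).
  { induction N as [|N IH]; [simpl; rewrite exp_0; lra|].
    rewrite zfin_cons_S, exp_plus. change (zfin nil (S N)) with 1.
    assert (HN : 0 < INR (S N)) by (apply lt_0_INR; lia).
    replace (ipow 1 (S N) * 1) with (/ INR (S N)) by (unfold ipow; rewrite pow_1; ring).
    pose proof (exp_ineq1_le (/ INR (S N))).
    apply Rle_trans with ((INR N + 1) * (1 + / INR (S N))).
    - rewrite S_INR in *. right. field. lra.
    - pose proof (pos_INR N). pose proof (Rinv_0_lt_compat _ HN).
      apply Rmult_le_compat; [lra | lra | exact IH | lra]. }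
  destruct (INR_archimed 1 (exp B)) as [n Hn]; [lra|].
  exists (S n). split; [lia|].
  apply exp_lt_inv. eapply Rlt_le_trans; [|apply H]. rewrite S_INR. lra.
Qed.

(* ones_excess q N is the truncation of zeta*(q,1,1,...) - zeta*(q). *)
Definition ones_excess (q : list nat) (N : nat) : R := nsum q (fun n => INR n - 1) N.

Lemma nsum_INR_split q N : nsum q INR N = zfin q N + ones_excess q N.
Proof.
  unfold ones_excess. rewrite zfin_nsum, <- nsum_plus. apply nsum_ext; intros n. ring.
Qed.

Lemma ones_excess_nonneg q N : (1 <= N)%nat -> 0 <= ones_excess q N.
Proof.
  intros HN. apply nsum_nonneg; [exact HN|]. intros n Hn.
  pose proof (le_INR 1 n ltac:(lia)). simpl in *. lra.
Qed.

Lemma one_minus_inv_bounds N : (1 <= N)%nat -> 0 <= 1 - / INR N < 1.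
Proof.
  intros HN. assert (HN1 : 1 <= INR N) by (apply (le_INR 1); lia).
  assert (0 < / INR N) by (apply Rinv_0_lt_compat; lra).
  assert (/ INR N <= 1) by (rewrite <- Rinv_1; apply Rinv_le_contravar; lra).
  lra.
Qed.

Lemma ones_deficit N r n : (1 <= n <= N)%nat ->
  INR n - zfin (repeat 1%nat r) n <= (INR n - 1) * (1 - / INR N) ^ r.
Proof.
  set (th := 1 - / INR N).
  revert n; induction r as [|r IH]; intros n Hn; [simpl; lra|].
  assert (Hth : 0 <= th) by (apply one_minus_inv_bounds; lia).
  change (repeat 1%nat (S r)) with ((1%nat :: nil) ++ repeat 1%nat r). rewrite zfin_app.
  replace (INR n - nsum (1%nat :: nil) (zfin (repeat 1%nat r)) n)
    with (nsum (1%nat :: nil) (fun m => INR m + -1 * zfin (repeat 1%nat r) m) n)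
    by (rewrite nsum_plus, nsum_scal, nsum_one_INR; ring).
  rewrite Rmult_comm. apply sum_n_m_le_pred; [lia | |].
  - rewrite ipow_1, zfin_at_1. simpl. lra.
  - intros m Hm. specialize (IH m ltac:(lia)).
    assert (HM : 2 <= INR m) by (apply (le_INR 2); lia).
    assert (HmN : INR m <= INR N) by (apply le_INR; lia).
    apply Rle_trans with (ipow 1 m * ((INR m - 1) * th ^ r)).
    + apply Rmult_le_compat_l; [left; apply ipow_pos; lia | lra].
    + replace (ipow 1 m * ((INR m - 1) * th ^ r)) with ((1 - / INR m) * th ^ r)
        by (unfold ipow; simpl; field; lra).
      simpl. apply Rmult_le_compat_r; [apply pow_le, Hth|].
      unfold th. assert (/ INR N <= / INR m) by (apply Rinv_le_contravar; lra). lra.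
Qed.

Lemma zfin_ones_approx p N y : (1 <= N)%nat -> y < nsum p INR N ->
  exists r, y < zfin (p ++ repeat 1%nat r) N.
Proof.
  intros HN Hy. set (th := 1 - / INR N). set (E := ones_excess p N).
  assert (Hth : 0 <= th < 1) by (apply one_minus_inv_bounds, HN).
  assert (HE : 0 <= E) by (apply ones_excess_nonneg, HN).
  destruct (pow_lt_1_zero th ltac:(rewrite Rabs_pos_eq; lra) ((nsum p INR N - y) / (E + 1)))
    as [r Hr]; [apply Rdiv_lt_0_compat; lra|].
  specialize (Hr r (le_n r)). rewrite Rabs_pos_eq in Hr by (apply pow_le; lra).
  exists r. rewrite zfin_app.
  assert (Hlow : nsum p (fun n => - th ^ r * (INR n - 1) + INR n) N
                 <= nsum p (zfin (repeat 1%nat r)) N).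
  { apply nsum_le; [exact HN|]. intros n Hn.
    pose proof (ones_deficit N r n Hn) as Hd. fold th in Hd. lra. }
  rewrite nsum_plus, nsum_scal in Hlow. fold (ones_excess p N) E in Hlow.
  assert (th ^ r * (E + 1) < nsum p INR N - y).
  { apply Rmult_lt_reg_r with (/ (E + 1)); [apply Rinv_0_lt_compat; lra|].
    rewrite Rmult_assoc, Rinv_r by lra. lra. }
  assert (0 <= th ^ r) by (apply pow_le; lra).
  nra.
Qed.

Lemma ones_excess_app_le q b N : (1 <= b)%nat -> (1 <= N)%nat ->
  ones_excess (q ++ b :: nil) N <= ones_excess q N.
Proof.
  intros Hb HN. unfold ones_excess. rewrite nsum_app. apply nsum_le; [exact HN|].
  intros n Hn. simpl nsum. rewrite <- (Rmult_1_l (INR n - 1)). apply sum_n_m_le_pred; [lia | |].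
  - rewrite ipow_1. simpl. lra.
  - intros m Hm. assert (HM : 1 <= INR m) by (apply (le_INR 1); lia).
    apply Rle_trans with (ipow 1 m * (INR m - 1)).
    + apply Rmult_le_compat_r; [lra | apply ipow_antitone; lia].
    + unfold ipow. rewrite pow_1.
      replace (/ INR m * (INR m - 1)) with (1 - / INR m) by (field; lra).
      assert (0 < / INR m) by (apply Rinv_0_lt_compat; lra). lra.
Qed.

Lemma ones_excess_app_le_quarter q b N : (2 <= b)%nat -> (1 <= N)%nat ->
  ones_excess (q ++ b :: nil) N <= / 4 * ones_excess q N.
Proof.
  intros Hb HN. unfold ones_excess. rewrite nsum_app, <- nsum_scal. apply nsum_le; [exact HN|].
  intros n Hn. simpl nsum. apply sum_n_m_le_pred; [lia | |].
  - rewrite ipow_1. simpl. lra.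
  - intros m Hm. assert (HM : 2 <= INR m) by (apply (le_INR 2); lia).
    apply Rle_trans with (ipow 2 m * (INR m - 1)).
    + apply Rmult_le_compat_r; [lra | apply ipow_antitone; lia].
    + unfold ipow. apply Rmult_le_reg_l with (INR m ^ 2); [apply pow_lt; lra|].
      rewrite <- Rmult_assoc, Rinv_r by (apply pow_nonzero; lra). simpl. nra.
Qed.

Lemma zfin_branch_le p a b t N : (a < b)%nat -> List.Forall (le 1) t ->
  zfin (p ++ b :: t) N <= zfin (p ++ a :: nil) N.
Proof.
  intros Hab Ht. replace b with (S (b - 1)) by lia.
  eapply Rle_trans; [apply zfin_tail_le, Ht | apply zfin_last_antitone; lia].
Qed.

Lemma zfin_gap q b : q <> nil ->
  exists d, 0 < d /\ forall N, zfin q N + d <= zfin (q ++ b :: nil) (S (S N)).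
Proof.
  intros Hq. set (g := fun n => zfin (b :: nil) n - 1).
  assert (Hg : forall n, (1 <= n)%nat -> 0 <= g n).
  { intros n Hn. unfold g. pose proof (zfin_ge_1 (b :: nil) n Hn). lra. }
  assert (Hsplit : forall M, zfin (q ++ b :: nil) M = nsum q g M + zfin q M).
  { intros M. rewrite zfin_app, zfin_nsum, <- nsum_plus. apply nsum_ext; intros n. unfold g; ring. }
  exists (nsum q g 2). split.
  - apply nsum_pos; [lia | intros; apply Hg; lia|].
    unfold g. rewrite zfin_cons_S, zfin_at_1. change (zfin nil 2) with 1.
    pose proof (ipow_pos b 2 ltac:(lia)). lra.
  - intros N. rewrite Hsplit, (Rplus_comm (nsum q g _)).
    apply Rplus_le_compat; [apply zfin_le_N; lia | apply nsum_le_N; [exact Hq | exact Hg | lia]].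
Qed.

(** * Prefixes and limits *)

Lemma prefix_S k r : prefix k (S r) = prefix k r ++ k r :: nil.
Proof. unfold prefix. rewrite seq_S, map_app. reflexivity. Qed.

Lemma prefix_add k a b : prefix k (a + b) = prefix k a ++ map k (seq a b).
Proof. unfold prefix. rewrite seq_app, map_app. reflexivity. Qed.

Lemma prefix_ext k m r : (forall i, (i < r)%nat -> k i = m i) -> prefix k r = prefix m r.
Proof.
  intros H. apply map_ext_in. intros i Hi. apply in_seq in Hi. apply H; lia.
Qed.

Lemma Forall_ge_1_map k a b : (forall i, (1 <= k i)%nat) -> List.Forall (le 1) (map k (seq a b)).
Proof. intros Hk. apply Forall_map, Forall_forall. intros i _. apply Hk. Qed.

Lemma zfin_prefix_le k r s N : (r <= s)%nat -> zfin (prefix k r) N <= zfin (prefix k s) (S N).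
Proof.
  intros Hrs. replace s with (r + (s - r))%nat by lia. rewrite prefix_add.
  eapply Rle_trans; [apply zfin_le_N, le_S, le_n | apply zfin_le_app; lia].
Qed.

Lemma admissible_cons k1 q : (2 <= k1)%nat -> List.Forall (le 1) q -> admissible (k1 :: q).
Proof.
  intros Hk1 Hq. split; [exact Hk1|]. rewrite Forall_forall in Hq.
  intros k [<-|Hk]; [lia | apply Hq, Hk].
Qed.

Lemma is_lim_seq_incr_bounded (u : nat -> R) B :
  (forall n, u n <= u (S n)) -> (forall n, u n <= B) -> is_lim_seq u (real (Lim_seq u)).
Proof.
  intros Hu HB. destruct (ex_finite_lim_seq_incr u B Hu HB) as [l Hl].
  rewrite (is_lim_seq_unique _ _ Hl). exact Hl.
Qed.

Lemma is_lim_seq_le_const (u : nat -> R) (l c : R) :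
  is_lim_seq u l -> (forall n, u n <= c) -> l <= c.
Proof.
  intros Hl Hc. apply (is_lim_seq_le u (fun _ => c) l c Hc Hl (is_lim_seq_const c)).
Qed.

Lemma is_lim_seq_gt (u : nat -> R) (l y : R) : is_lim_seq u l -> y < l -> exists n, y < u n.
Proof.
  intros Hl Hy. apply is_lim_seq_spec in Hl.
  destruct (Hl (mkposreal (l - y) ltac:(lra))) as [n Hn].
  exists n. specialize (Hn n (le_n n)). simpl in Hn. apply Rabs_def2 in Hn. lra.
Qed.

Section BoundedIndex.

Variables (q : list nat) (B : R).
Hypothesis HB : forall N, zfin q N <= B.

Lemma zeta_star_is_lim : is_lim_seq (zfin q) (zeta_star q).
Proof. apply (is_lim_seq_incr_bounded _ B); [intros; apply zfin_le_N; lia | exact HB]. Qed.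

Lemma zfin_le_zeta_star N : zfin q N <= zeta_star q.
Proof. apply is_lim_seq_incr_compare; [apply zeta_star_is_lim | intros; apply zfin_le_N; lia]. Qed.

Lemma zeta_star_le_bound : zeta_star q <= B.
Proof. apply (is_lim_seq_le_const (zfin q)); [apply zeta_star_is_lim | exact HB]. Qed.

End BoundedIndex.

Section BoundedSequence.

Variables (k : nat -> nat) (B : R).
Hypothesis HB : forall r N, zfin (prefix k r) N <= B.

Lemma zeta_star_prefix_incr r : zeta_star (prefix k r) <= zeta_star (prefix k (S r)).
Proof.
  apply zeta_star_le_bound. intros N.
  eapply Rle_trans; [apply zfin_prefix_le, le_S, le_n | apply (zfin_le_zeta_star _ B), HB].
Qed.

Lemma eta_is_lim : is_lim_seq (fun r => zeta_star (prefix k r)) (eta k).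
Proof.
  apply (is_lim_seq_incr_bounded _ B); [exact zeta_star_prefix_incr|].
  intros r. apply zeta_star_le_bound, HB.
Qed.

Lemma zeta_star_le_eta r : zeta_star (prefix k r) <= eta k.
Proof.
  apply (is_lim_seq_incr_compare (fun r => zeta_star (prefix k r)));
    [apply eta_is_lim | exact zeta_star_prefix_incr].
Qed.

Lemma zfin_le_eta r N : zfin (prefix k r) N <= eta k.
Proof. eapply Rle_trans; [apply (zfin_le_zeta_star _ B), HB | apply zeta_star_le_eta]. Qed.

Lemma eta_le_bound : eta k <= B.
Proof.
  apply (is_lim_seq_le_const _ _ _ eta_is_lim). intros r. apply zeta_star_le_bound, HB.
Qed.

Lemma zfin_prefix_eta_gap r : exists d, 0 < d /\ forall N, zfin (prefix k (S r)) N <= eta k - d.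
Proof.
  destruct (zfin_gap (prefix k (S r)) (k (S r))) as [d [Hd Hgap]].
  { rewrite prefix_S. destruct (prefix k r); discriminate. }
  exists d. split; [exact Hd|]. intros N. pose proof (Hgap N) as Hg. rewrite <- prefix_S in Hg.
  pose proof (zfin_le_eta (S (S r)) (S (S N))). lra.
Qed.

Lemma eta_gt_zfin y : y < eta k -> exists r N, y < zfin (prefix k r) N.
Proof.
  intros Hy. destruct (is_lim_seq_gt _ _ _ eta_is_lim Hy) as [r Hr].
  destruct (is_lim_seq_gt _ _ _ (zeta_star_is_lim _ B (HB r)) Hr) as [N HN].
  exists r, N. exact HN.
Qed.

Lemma eta_gt_1 : 1 < eta k.
Proof.
  eapply Rlt_le_trans; [|apply (zfin_le_eta 1 2)].
  change (prefix k 1) with (k 0%nat :: nil). rewrite zfin_cons_S, zfin_at_1.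
  change (zfin nil 2) with 1. pose proof (ipow_pos (k 0%nat) 2 ltac:(lia)). lra.
Qed.

End BoundedSequence.

(** * Boundedness on T and the lexicographic order *)

Lemma admissible_prefix_app k s t : (forall i, (1 <= k i)%nat) -> (2 <= k 0%nat)%nat ->
  (1 <= s)%nat -> List.Forall (le 1) t -> admissible (prefix k s ++ t).
Proof.
  intros Hk Hk0 Hs Ht. destruct s as [|s]; [lia|].
  change (prefix k (S s) ++ t) with (k 0%nat :: map k (seq 1 s) ++ t).
  apply admissible_cons; [exact Hk0|].
  apply Forall_app. split; [apply Forall_ge_1_map, Hk | exact Ht].
Qed.

Lemma prefix_bounded k s a : (forall i, (1 <= k i)%nat) -> k s = S a ->
  admissible (prefix k s ++ a :: nil) -> exists B, forall r N, zfin (prefix k r) N <= B.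
Proof.
  intros Hk Hks Hadm. destruct (admissible_bounded _ Hadm) as [B HB].
  assert (Hlong : forall t N, zfin (prefix k (S s + t)) N <= B).
  { intros t N. rewrite prefix_add, prefix_S, <- app_assoc, Hks.
    eapply Rle_trans; [apply zfin_tail_le, Forall_ge_1_map, Hk | apply HB]. }
  exists B. intros r N. destruct (Nat.le_gt_cases (S s) r) as [Hr|Hr].
  - replace r with (S s + (r - S s))%nat by lia. apply Hlong.
  - eapply Rle_trans; [apply (zfin_prefix_le k r (S s)); lia|].
    rewrite <- (Nat.add_0_r (S s)). apply Hlong.
Qed.

Lemma inT_bounded k : inT k -> exists B, forall r N, zfin (prefix k r) N <= B.
Proof.
  intros (Hk0 & Hk & H2). destruct (Nat.eq_dec (k 0%nat) 2) as [E|E].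
  - destruct (H2 E) as [s [Hs1 Hs2]].
    apply (prefix_bounded k s (k s - 1)); [exact Hk | lia|].
    apply admissible_prefix_app; [exact Hk | exact Hk0 | exact Hs1|].
    constructor; [lia | constructor].
  - apply (prefix_bounded k 0 (k 0%nat - 1)); [exact Hk | lia|].
    apply admissible_cons; [lia | constructor].
Qed.

Lemma eta_lt_of_succ_lex k m : inT k -> inT m -> succ_lex k m -> eta m < eta k.
Proof.
  intros Hk Hm [j [Hpre Hlt]].
  destruct (inT_bounded k Hk) as [Bk HBk]. destruct Hm as (_ & Hm1 & _).
  destruct (zfin_prefix_eta_gap k Bk HBk j) as [d [Hd Hgap]].
  assert (Hq : prefix k (S j) = prefix m j ++ k j :: nil).
  { rewrite prefix_S, (prefix_ext k m j Hpre). reflexivity. }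
  assert (Hm_le : forall r N, zfin (prefix m r) N <= zfin (prefix k (S j)) (S N)).
  { intros r N. rewrite Hq. destruct (Nat.le_gt_cases r j) as [Hr|Hr].
    - eapply Rle_trans; [apply (zfin_prefix_le m r j N Hr) | apply zfin_le_app; lia].
    - replace r with (S j + (r - S j))%nat by lia. rewrite prefix_add, prefix_S, <- app_assoc.
      eapply Rle_trans; [apply zfin_branch_le; [exact Hlt | apply Forall_ge_1_map, Hm1]|].
      apply zfin_le_N; lia. }
  assert (Hbound : forall r N, zfin (prefix m r) N <= eta k - d).
  { intros r N. eapply Rle_trans; [apply Hm_le | apply Hgap]. }
  pose proof (eta_le_bound m _ Hbound). lra.
Qed.

Lemma least_nat (P : nat -> Prop) : (exists n, P n) ->
  exists n, P n /\ forall m, (m < n)%nat -> ~ P m.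
Proof.
  intros Hex.
  destruct (dec_inh_nat_subset_has_unique_least_element P (fun n => classic (P n)) Hex)
    as [n [[Pn Hmin] _]].
  exists n. split; [exact Pn|]. intros m Hm Pm. specialize (Hmin m Pm). lia.
Qed.

Lemma succ_lex_total k m : ~ (forall i, k i = m i) -> succ_lex k m \/ succ_lex m k.
Proof.
  intros Hne. apply not_all_ex_not in Hne.
  destruct (least_nat _ Hne) as [j [Hj Hmin]].
  assert (Hpre : forall i, (i < j)%nat -> k i = m i) by (intros i Hi; apply NNPP, Hmin, Hi).
  destruct (Nat.lt_gt_cases (k j) (m j)) as [[Hlt|Hlt] _]; [exact Hj|left|right];
    exists j; split; auto. intros i Hi. symmetry. apply Hpre, Hi.
Qed.

Lemma eta_ext k m : (forall i, k i = m i) -> eta k = eta m.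
Proof.
  intros H. unfold eta. f_equal. apply Lim_seq_ext. intros r. f_equal. apply prefix_ext; auto.
Qed.

Lemma eta_injective k m : inT k -> inT m -> eta k = eta m -> forall i, k i = m i.
Proof.
  intros Hk Hm He. apply NNPP. intros Hne.
  destruct (succ_lex_total k m Hne) as [H|H].
  - pose proof (eta_lt_of_succ_lex k m Hk Hm H). lra.
  - pose proof (eta_lt_of_succ_lex m k Hm Hk H). lra.
Qed.

Lemma succ_lex_iff_eta_lt k m : inT k -> inT m -> (succ_lex k m <-> eta m < eta k).
Proof.
  intros Hk Hm. split; [apply eta_lt_of_succ_lex; assumption|]. intros Hlt.
  destruct (classic (forall i, k i = m i)) as [Heq|Hne].
  - rewrite (eta_ext k m Heq) in Hlt. lra.
  - destruct (succ_lex_total k m Hne) as [H|H]; [exact H|].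
    pose proof (eta_lt_of_succ_lex m k Hm Hk H). lra.
Qed.

(** * The greedy inverse of eta *)

(* [brackets x p] says zeta*(p) < x <= zeta*(p,1,1,...), phrased through truncations. *)
Definition brackets (x : R) (p : list nat) : Prop :=
  (exists y, y < x /\ forall N, zfin p N <= y) /\
  (forall y, y < x -> exists N, (1 <= N)%nat /\ y < nsum p INR N).

Lemma brackets_nil x : 1 < x -> brackets x nil.
Proof.
  intros Hx. split.
  - exists 1. split; [exact Hx | intros; apply Rle_refl].
  - intros y _. destruct (INR_archimed 1 y) as [n Hn]; [lra|].
    exists (S n). split; [lia|]. change (nsum nil INR (S n)) with (INR (S n)). rewrite S_INR. lra.
Qed.

Lemma exists_pow_half_lt e : 0 < e -> exists a, (2 <= a)%nat /\ 4 * (/ 2) ^ a < e.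
Proof.
  intros He.
  destruct (pow_lt_1_zero (/ 2) ltac:(rewrite Rabs_pos_eq; lra) (e / 4) ltac:(lra)) as [N HN].
  exists (Nat.max N 2). split; [lia|]. specialize (HN (Nat.max N 2) ltac:(lia)).
  rewrite Rabs_pos_eq in HN by (apply pow_le; lra). lra.
Qed.

(* The greedy step: the least a with zeta*(p,a) < x. *)
Lemma brackets_extend x p : brackets x p -> exists a, (1 <= a)%nat /\ brackets x (p ++ a :: nil).
Proof.
  intros [[y0 [Hy0 Hb0]] Hreach].
  set (Below := fun a => (1 <= a)%nat /\ exists y, y < x /\ forall N, zfin (p ++ a :: nil) N <= y).
  assert (Hy1 : 1 <= y0) by (rewrite <- (zfin_at_1 p); apply Hb0).
  assert (Hex : exists a, Below a).
  { destruct (exists_pow_half_lt ((x - y0) / y0)) as [a [Ha Hsmall]].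
    { apply Rdiv_lt_0_compat; lra. }
    exists a. split; [lia|]. exists ((1 + 4 * (/ 2) ^ a) * y0). split.
    - apply Rmult_lt_compat_r with (r := y0) in Hsmall; [|lra].
      replace ((x - y0) / y0 * y0) with (x - y0) in Hsmall by (field; lra). lra.
    - intros N. eapply Rle_trans; [apply zfin_app_singleton_le, Ha|].
      apply Rmult_le_compat_l; [|apply Hb0]. pose proof (pow_lt (/ 2) a ltac:(lra)). lra. }
  destruct (least_nat Below Hex) as [a [[Ha Hbelow] Hmin]].
  exists a. split; [exact Ha|]. split; [exact Hbelow|].
  intros y Hy. destruct (Nat.eq_dec a 1) as [->|Ha1].
  - destruct (Hreach y Hy) as [N [HN Hlt]]. exists N. split; [exact HN|].
    rewrite nsum_app, (nsum_ext p _ INR nsum_one_INR). exact Hlt.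
  - apply NNPP. intros Hno. apply (Hmin (a - 1)%nat); [lia|]. split; [lia|].
    exists y. split; [exact Hy|]. apply zfin_le_of_pos. intros N HN.
    apply Rnot_lt_le. intros Hlt. apply Hno. exists N. split; [exact HN|].
    replace a with (S (a - 1)) by lia. rewrite nsum_INR_last. exact Hlt.
Qed.

Lemma prefix_choice (P : list nat -> Prop) : P nil ->
  (forall p, P p -> exists a, P (p ++ a :: nil)) -> exists k, forall r, P (prefix k r).
Proof.
  intros Hnil Hstep.
  assert (Htot : forall p, exists a, P p -> P (p ++ a :: nil)).
  { intros p. destruct (classic (P p)) as [Hp|Hp].
    - destruct (Hstep p Hp) as [a Ha]. exists a. intros _. exact Ha.
    - exists 0%nat. intros Hp'. contradiction. }
  destruct (choice _ Htot) as [f Hf].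
  set (build := nat_rect (fun _ => list nat) nil (fun _ p => p ++ f p :: nil)).
  assert (Hbuild : forall r, prefix (fun i => f (build i)) r = build r).
  { induction r as [|r IH]; [reflexivity|]. rewrite prefix_S, IH. reflexivity. }
  exists (fun i => f (build i)). intros r. rewrite Hbuild.
  induction r as [|r IH]; [exact Hnil | apply Hf, IH].
Qed.

Lemma prefix_eventually_ones k r0 t : (forall s, (r0 <= s)%nat -> k s = 1%nat) ->
  prefix k (r0 + t) = prefix k r0 ++ repeat 1%nat t.
Proof.
  intros H1. rewrite prefix_add. f_equal.
  rewrite (map_ext_in k (fun _ => 1%nat)), map_const, length_seq; [reflexivity|].
  intros i Hi. apply in_seq in Hi. apply H1. lia.
Qed.

(* Along a sequence with infinitely many entries >= 2, the gap between
   zeta*(k_1..k_r) and zeta*(k_1..k_r,1,1,...) shrinks by 1/4 at each such entry. *)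
Lemma ones_excess_vanishes k : (forall i, (1 <= k i)%nat) -> (2 <= k 0%nat)%nat ->
  (forall r0, exists s, (r0 <= s)%nat /\ (2 <= k s)%nat) ->
  forall e, 0 < e -> exists r, forall N, (1 <= N)%nat -> ones_excess (prefix k r) N <= e.
Proof.
  intros Hk Hk0 Hinf e He.
  assert (Hanti : forall r r' N, (1 <= N)%nat -> (r <= r')%nat ->
    ones_excess (prefix k r') N <= ones_excess (prefix k r) N).
  { intros r r' N HN Hr. induction Hr as [|r' _ IH]; [apply Rle_refl|].
    rewrite prefix_S.
    eapply Rle_trans; [apply ones_excess_app_le; [apply Hk | exact HN] | exact IH]. }
  destruct (Hinf 1%nat) as [s [Hs1 Hs2]].
  destruct (admissible_bounded (prefix k s ++ (k s - 1)%nat :: nil)) as [B HB].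
  { apply admissible_prefix_app; [exact Hk | exact Hk0 | exact Hs1|].
    constructor; [lia | constructor]. }
  assert (Hgeo : forall j, exists r,
    forall N, (1 <= N)%nat -> ones_excess (prefix k r) N <= B * (/ 4) ^ j).
  { induction j as [|j [r Hr]].
    - exists (S s). intros N HN. rewrite pow_O, Rmult_1_r.
      pose proof (nsum_INR_split (prefix k (S s)) N) as Hsplit.
      rewrite prefix_S in Hsplit at 1. replace (k s) with (S (k s - 1)) in Hsplit at 1 by lia.
      rewrite nsum_INR_last in Hsplit.
      pose proof (HB N). pose proof (zfin_nonneg (prefix k (S s)) N). lra.
    - destruct (Hinf r) as [s' [Hs'1 Hs'2]]. exists (S s'). intros N HN.
      rewrite prefix_S. simpl pow.
      pose proof (ones_excess_app_le_quarter (prefix k s') (k s') N Hs'2 HN).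
      pose proof (Hanti r s' N HN Hs'1). pose proof (Hr N HN). lra. }
  assert (HB0 : 0 <= B).
  { eapply Rle_trans; [apply (zfin_nonneg (prefix k s ++ (k s - 1)%nat :: nil) 0) | apply HB]. }
  destruct (pow_lt_1_zero (/ 4) ltac:(rewrite Rabs_pos_eq; lra) (e / (B + 1))) as [j Hj];
    [apply Rdiv_lt_0_compat; lra|].
  specialize (Hj j (le_n j)). rewrite Rabs_pos_eq in Hj by (apply pow_le; lra).
  destruct (Hgeo j) as [r Hr]. exists r. intros N HN. specialize (Hr N HN).
  assert (B * (/ 4) ^ j <= e).
  { apply Rmult_lt_compat_l with (r := B + 1) in Hj; [|lra].
    replace ((B + 1) * (e / (B + 1))) with e in Hj by (field; lra).
    assert (0 <= (/ 4) ^ j) by (apply pow_le; lra). nra. }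
  lra.
Qed.

Lemma ones_from_or_ge_2 k r0 : (forall i, (1 <= k i)%nat) ->
  (forall s, (r0 <= s)%nat -> k s = 1%nat) \/ (exists s, (r0 <= s)%nat /\ (2 <= k s)%nat).
Proof.
  intros Hk. destruct (classic (exists s, (r0 <= s)%nat /\ (2 <= k s)%nat)) as [H|H].
  { right; exact H. }
  left. intros s Hs. pose proof (Hk s). destruct (Nat.eq_dec (k s) 1) as [E|E]; [exact E|].
  exfalso. apply H. exists s. split; [exact Hs | lia].
Qed.

Section Greedy.

Variables (x : R) (k : nat -> nat).
Hypothesis Hk : forall i, (1 <= k i)%nat.
Hypothesis Hbr : forall r, brackets x (prefix k r).

Lemma greedy_zfin_le r N : zfin (prefix k r) N <= x.
Proof. destruct (Hbr r) as [[y [Hy Hb]] _]. specialize (Hb N). lra. Qed.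

Lemma greedy_inT : inT k.
Proof.
  assert (Hk0 : (2 <= k 0%nat)%nat).
  { destruct (Nat.eq_dec (k 0%nat) 1) as [E|E]; [exfalso|pose proof (Hk 0%nat); lia].
    destruct (Hbr 1%nat) as [[y [_ Hb]] _]. change (prefix k 1) with (k 0%nat :: nil) in Hb.
    rewrite E in Hb. destruct (zfin_one_unbounded y) as [N [_ HN]]. specialize (Hb N). lra. }
  split; [exact Hk0|]. split; [exact Hk|]. intros E.
  destruct (ones_from_or_ge_2 k 1 Hk) as [Hones|Hs]; [exfalso | exact Hs].
  (* k = (2,1,1,...) is excluded since zeta*(2,1,1,...) = zeta(1) diverges *)
  destruct (zfin_one_unbounded x) as [N [HN Hx]].
  rewrite <- (app_nil_l (1%nat :: nil)), <- nsum_INR_last in Hx.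
  destruct (zfin_ones_approx (2%nat :: nil) N x HN Hx) as [t Ht].
  pose proof (greedy_zfin_le (1 + t) N) as Hle.
  rewrite (prefix_eventually_ones k 1 t Hones) in Hle.
  change (prefix k 1) with (k 0%nat :: nil) in Hle. rewrite E in Hle. lra.
Qed.

Lemma greedy_approx y : y < x -> exists r N, y < zfin (prefix k r) N.
Proof.
  intros Hy.
  destruct (classic (exists r0, forall s, (r0 <= s)%nat -> k s = 1%nat)) as [[r0 Hr0]|Hinf].
  - destruct (Hbr r0) as [_ Hreach]. destruct (Hreach y Hy) as [N [HN Hlt]].
    destruct (zfin_ones_approx _ N y HN Hlt) as [t Ht].
    exists (r0 + t)%nat, N. rewrite prefix_eventually_ones; assumption.
  - assert (Hinf' : forall r0, exists s, (r0 <= s)%nat /\ (2 <= k s)%nat).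
    { intros r0. destruct (ones_from_or_ge_2 k r0 Hk) as [Hones|Hs]; [|exact Hs].
      exfalso. apply Hinf. exists r0. exact Hones. }
    destruct greedy_inT as [Hk0 _].
    destruct (ones_excess_vanishes k Hk Hk0 Hinf' ((x - y) / 2)) as [r Hr]; [lra|].
    destruct (Hbr r) as [_ Hreach]. destruct (Hreach ((x + y) / 2)) as [N [HN Hlt]]; [lra|].
    exists r, N. rewrite nsum_INR_split in Hlt. specialize (Hr N HN). lra.
Qed.

Lemma greedy_eta : eta k = x.
Proof.
  apply Rle_antisym; [apply eta_le_bound, greedy_zfin_le|].
  apply Rnot_lt_le. intros Hlt. destruct (greedy_approx _ Hlt) as [r [N HN]].
  pose proof (zfin_le_eta k x greedy_zfin_le r N). lra.
Qed.

End Greedy.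

Lemma eta_surjective x : 1 < x -> exists k, inT k /\ eta k = x.
Proof.
  intros Hx.
  destruct (prefix_choice (fun p => List.Forall (le 1) p /\ brackets x p)) as [k Hk].
  - split; [constructor | apply brackets_nil, Hx].
  - intros p [Hp Hb]. destruct (brackets_extend x p Hb) as [a [Ha Hb']].
    exists a. split; [|exact Hb'].
    apply Forall_app. split; [exact Hp | constructor; [exact Ha | constructor]].
  - assert (Hk1 : forall i, (1 <= k i)%nat).
    { intros i. destruct (Hk (S i)) as [Hf _]. rewrite prefix_S in Hf.
      apply Forall_app in Hf as [_ Hf]. apply Forall_cons_iff in Hf as [Hi _]. exact Hi. }
    assert (Hbr : forall r, brackets x (prefix k r)) by (intros r; apply Hk).
    exists k. split; [apply (greedy_inT x) | apply greedy_eta]; assumption.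
Qed.

(** * Derived sets *)

Lemma Zstar_ge_1 y : Zstar y -> 1 <= y.
Proof.
  intros [p [Hadm ->]]. destruct (admissible_bounded p Hadm) as [B HB].
  rewrite <- (zfin_at_1 p). apply (zfin_le_zeta_star p B HB).
Qed.

Lemma Zstar_above_1 eps : 0 < eps -> exists y, Zstar y /\ 1 < y < 1 + eps.
Proof.
  intros He. destruct (exists_pow_half_lt eps He) as [a [Ha Hsmall]].
  pose proof (zfin_singleton_le a) as HB.
  exists (zeta_star (a :: nil)). split; [|split].
  - exists (a :: nil). split; [apply admissible_cons; [exact Ha | constructor] | reflexivity].
  - eapply Rlt_le_trans; [|apply (zfin_le_zeta_star _ _ (fun N => HB N Ha) 2)].
    rewrite zfin_cons_S, zfin_at_1. change (zfin nil 2) with 1.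
    pose proof (ipow_pos a 2 ltac:(lia)). lra.
  - eapply Rle_lt_trans; [apply zeta_star_le_bound; intros N; apply HB, Ha | lra].
Qed.

Lemma Zstar_below x eps : 1 < x -> 0 < eps -> exists y, Zstar y /\ x - eps < y < x.
Proof.
  intros Hx He. destruct (eta_surjective x Hx) as [k [Hk <-]].
  destruct (inT_bounded k Hk) as [B HB].
  destruct (eta_gt_zfin k B HB (eta k - eps)) as [r [N HN]]; [lra|].
  destruct (zfin_prefix_eta_gap k B HB r) as [d [Hd Hgap]].
  exists (zeta_star (prefix k (S r))). split; [|split].
  - eexists. split; [|reflexivity]. destruct Hk as (Hk0 & Hk1 & _).
    rewrite <- (app_nil_r (prefix k (S r))).
    apply admissible_prefix_app; [exact Hk1 | exact Hk0 | lia | constructor].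
  - eapply Rlt_le_trans; [exact HN|]. eapply Rle_trans; [apply zfin_prefix_le, le_S, le_n|].
    apply (zfin_le_zeta_star _ _ Hgap).
  - pose proof (zeta_star_le_bound _ _ Hgap). lra.
Qed.

Lemma derived_ge_1 (C : R -> Prop) : (forall y, C y -> 1 <= y) ->
  forall x, derived C x -> 1 <= x.
Proof.
  intros HC x H. apply Rnot_lt_le. intros Hlt. destruct (H (1 - x)) as [y [Hy [_ Hd]]]; [lra|].
  apply HC in Hy. apply Rabs_def2 in Hd. lra.
Qed.

Lemma derived_Zstar x : derived Zstar x <-> 1 <= x.
Proof.
  split; [apply derived_ge_1, Zstar_ge_1|].
  intros Hx eps He. destruct (Rle_lt_or_eq_dec 1 x Hx) as [Hlt|<-].
  - destruct (Zstar_below x eps Hlt He) as [y [Hy Hyx]]. exists y.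
    split; [exact Hy|]. split; [lra|]. rewrite Rabs_left1; lra.
  - destruct (Zstar_above_1 eps He) as [y [Hy Hy1]]. exists y.
    split; [exact Hy|]. split; [lra|]. rewrite Rabs_pos_eq; lra.
Qed.

Lemma derived_half_line (C : R -> Prop) : (forall x, C x <-> 1 <= x) ->
  forall x, derived C x <-> 1 <= x.
Proof.
  intros HC x. split; [apply derived_ge_1; intros y; apply HC|].
  intros Hx eps He. exists (x + eps / 2). split; [apply HC; lra|].
  split; [lra|]. rewrite Rabs_pos_eq; lra.
Qed.

Lemma derived_n_Zstar n : (1 <= n)%nat -> forall x, derived_n n Zstar x <-> 1 <= x.
Proof.
  induction 1 as [|n _ IH]; [exact derived_Zstar|]. apply derived_half_line, IH.
Qed.

Theorem theorem1p3 :
  (* (i) *)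
  (forall k, inT k ->
     exists l : R, is_lim_seq (fun r => zeta_star (prefix k r)) l /\ 1 < l) /\
  (* (ii) bijectivity of eta : T -> (1, +oo) *)
  (forall k m, inT k -> inT m -> eta k = eta m -> forall i, k i = m i) /\
  (forall x : R, 1 < x -> exists k, inT k /\ eta k = x) /\
  (* (ii) order reversal *)
  (forall k m, inT k -> inT m -> (succ_lex k m <-> eta m < eta k)) /\
  (* (iii) *)
  (forall n : nat, (1 <= n)%nat ->
     forall x : R, derived_n n Zstar x <-> 1 <= x).
Proof.
  split; [|split; [exact eta_injective|split; [exact eta_surjective|split]]].
  - intros k Hk. destruct (inT_bounded k Hk) as [B HB].
    exists (eta k). split; [exact (eta_is_lim k B HB) | exact (eta_gt_1 k B HB)].
  - exact succ_lex_iff_eta_lt.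
  - exact derived_n_Zstar.
Qed.
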